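(* Let $\lambda,\mu$ be partitions and $x$ an indeterminate. Put $$X_{\lambda\mu}(x):=\prod_{(i,j)\in[\mu]}(j-i-x)\prod_{(i,j)\in [\lambda]}\biggl((j-i-\mu_1+x)\prod_{1\le k\le\mu_1}\frac{j-i+\bar{\mu}_k-k+1+x}{j-i+\bar{\mu}_k-k+x}\biggr)$$ and, for a non-negative integer $L$, $$Y^{L}_{\lambda\mu}(x):=(-1)^{\binom L2}x^L\,\frac{\displaystyle\prod_{a\in B_L^\lambda}\prod_{1\leq i\leq a}(i+x)\prod_{b\in B_L^\mu}\prod_{1\le j\le b}(j-x)}{\displaystyle\prod_{(a,b)\in B_L^\lambda\times B_L^\mu}(a-b+x)}.$$ Then $X_{\lambda\mu}(x)=Y^L_{\lambda\mu}(x)$ for every integer $L\geq \max\{\ell(\lambda), \ell(\mu)\}$.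
   Context: For a partition $\lambda=(\lambda_1\ge\lambda_2\ge\cdots)$, $\ell(\lambda)$ is the number of nonzero parts, $[\lambda]=\{(i,j): i\ge1,\ 1\le j\le\lambda_i\}$ is its diagram, and $\bar\lambda$ is the conjugate partition ($\bar\lambda_k$ = number of $i$ with $\lambda_i\ge k$). For an integer $L\ge\ell(\lambda)$, the set of $L$-beta numbers of $\lambda$ is $B^\lambda_L=\{\lambda_i+L-i : 1\le i\le L\}$ (with $\lambda_i=0$ for $i>\ell(\lambda)$). *)

From HB Require Import structures.
From mathcomp Require Import all_boot all_order all_algebra.
Set Implicit Arguments. Unset Strict Implicit. Unset Printing Implicit Defensive.
Import Order.TTheory GRing.Theory Num.Theory.
Local Open Scope ring_scope.

Definition is_partition (s : seq nat) : bool :=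
  sorted geq s && all (fun m => (0 < m)%N) s.

Definition plen (s : seq nat) : nat := size s.

(* lambda_i, 1-indexed, with lambda_i = 0 for i > l(lambda) *)
Definition part (s : seq nat) (i : nat) : nat := nth 0%N s i.-1.

Definition conjp (s : seq nat) (k : nat) : nat := count (fun m => (k <= m)%N) s.

(* L-beta numbers B^lambda_L = { lambda_i + L - i : 1 <= i <= L } (listed, all distinct) *)
Definition beta (L : nat) (s : seq nat) : seq nat :=
  [seq (part s i + L - i)%N | i <- iota 1 L].

Definition RF := {fraction {poly rat}}.
Definition xx : RF := tofrac 'X.

Definition prod_diag (s : seq nat) (F : nat -> nat -> RF) : RF :=
  \prod_(i <- iota 1 (plen s)) \prod_(j <- iota 1 (part s i)) F i j.

Definition Xlm (lam mu : seq nat) : RF :=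
  prod_diag mu (fun i j => j%:R - i%:R - xx) *
  prod_diag lam (fun i j =>
    (j%:R - i%:R - (part mu 1)%:R + xx) *
    \prod_(k <- iota 1 (part mu 1))
       ((j%:R - i%:R + (conjp mu k)%:R - k%:R + 1 + xx) /
        (j%:R - i%:R + (conjp mu k)%:R - k%:R + xx))).

Definition Ylm (L : nat) (lam mu : seq nat) : RF :=
  (-1) ^+ 'C(L, 2) * xx ^+ L *
  ((\prod_(a <- beta L lam) \prod_(i <- iota 1 a) (i%:R + xx)) *
   (\prod_(b <- beta L mu) \prod_(j <- iota 1 b) (j%:R - xx)))
  / \prod_(a <- beta L lam) \prod_(b <- beta L mu) (a%:R - b%:R + xx).

From mathcomp Require Import all_boot all_order all_algebra.
From mathcomp Require Import ring zify.
Set Implicit Arguments. Unset Strict Implicit. Unset Printing Implicit Defensive.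
Import GRing.Theory.
Local Open Scope ring_scope.

(* Write Y as (-1)^C(L,2) x^L times the rising factorials of -x over C = B^mu_L
   times the product of H_C(a) = (1+x)...(a+x) / prod_{b in C} (a - b + x) over
   a in B^lambda_L.  The box (i, j) of lambda raises the beta number
   lambda_i + L - i by one, so H_C telescopes over the diagram of lambda: the box
   contributes g(a) = H_C(a) / H_C(a-1) at a = L - i + j.  For C = B^mu_L, g(a) is
   a product over the rows of mu, which an induction on the first row of mu turns
   into the product over the columns of mu occurring in X.  Exchanging lambda with
   mu and x with -x leaves Y unchanged, so mu is stripped off in the same way, and
   Y of two empty partitions is 1. *)

Lemma iotaSr m n : iota m n.+1 = iota m n ++ [:: (m + n)%N].
Proof. by rewrite -addn1 iotaD. Qed.

Lemma rev_iota0 n : rev (iota 0 n) = [seq n - i | i <- iota 1 n]%N.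
Proof.
elim: n => [|n IHn] //; rewrite iotaSr rev_cat IHn /= subSS subn0.
by rewrite -[iota 2 n]/(iota (1 + 1) n) iotaDl -map_comp.
Qed.

Lemma size_beta L s : size (beta L s) = L.
Proof. by rewrite size_map size_iota. Qed.

Lemma beta_nil L : beta L [::] = rev (iota 0 L).
Proof. by rewrite rev_iota0; apply: eq_map => i; rewrite /part nth_nil. Qed.

Lemma is_partition_cons r s :
  is_partition (r :: s) -> is_partition s /\ all (fun m => (m <= r)%N) s.
Proof.
rewrite /is_partition /= => /andP[s_sorted /andP[_ s_pos]]; split.
  by rewrite (path_sorted s_sorted) s_pos.
exact: order_path_min (rev_trans leq_trans) s_sorted.
Qed.

Lemma part1_le r s : all (fun m => (m <= r)%N) s -> (part s 1 <= r)%N.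
Proof. by case: s => //= a s /andP[]. Qed.

Lemma conjp_eq0 s k : is_partition s -> (part s 1 < k)%N -> conjp s k = 0%N.
Proof.
case: s => [|r s] // s_part; rewrite /part /= => r_lt_k.
have [_ s_le_r] := is_partition_cons s_part.
rewrite /conjp /= leqNgt r_lt_k /=; apply/eqP; rewrite -leqn0 leqNgt -has_count.
apply/hasPn => m /(allP s_le_r) m_le_r; rewrite -ltnNge.
exact: leq_ltn_trans m_le_r r_lt_k.
Qed.

Section BetaProducts.

Variable F : fieldType.
Implicit Types (x y : F) (B C : seq nat).

(* The only property of the indeterminate that is used: it keeps all the
   denominators nonzero. *)
Definition generic y := forall n m : nat, y + n%:R - m%:R != 0.

Lemma generic_neq0 y : generic y -> y != 0.
Proof. by move/(_ 0%N 0%N); rewrite addr0 subr0. Qed.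

Lemma generic_shift y n m : generic y -> generic (n%:R - m%:R + y).
Proof.
move=> gy k l; have := gy (n + k)%N (m + l)%N.
suff -> : n%:R - m%:R + y + k%:R - l%:R = y + (n + k)%N%:R - (m + l)%N%:R by [].
by rewrite !natrD; ring.
Qed.

Lemma generic_add1 y : generic y -> generic (y + 1).
Proof. by move/(generic_shift 1 0); rewrite subr0 addrC. Qed.

Lemma generic_opp y : generic y -> generic (- y).
Proof.
move=> gy n m; suff -> : - y + n%:R - m%:R = - (y + m%:R - n%:R) by rewrite oppr_eq0.
by ring.
Qed.

Lemma prod_telescope (h : nat -> F) a n : (forall k, h k != 0) ->
  \prod_(k <- iota a n) (h k / h k.+1) = h a / h (a + n)%N.
Proof.
move=> h_neq0; elim: n => [|n IHn]; first by rewrite big_nil addn0 divff.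
by rewrite iotaSr big_cat big_seq1 IHn addnS /= mulrA divfK.
Qed.

Definition rising x a := \prod_(i <- iota 1 a) (i%:R + x).

Lemma risingS x a : rising x a.+1 = rising x a * (a.+1%:R + x).
Proof. by rewrite /rising iotaSr big_cat big_seq1. Qed.

Definition Ybeta x L B C :=
  (-1) ^+ 'C(L, 2) * x ^+ L *
  ((\prod_(a <- B) rising x a) * (\prod_(b <- C) rising (- x) b))
  / \prod_(a <- B) \prod_(b <- C) (a%:R - b%:R + x).

Definition Hbeta x C a := rising x a / \prod_(b <- C) (a%:R - b%:R + x).

Definition gbeta x C a :=
  (a%:R + x) * \prod_(b <- C) ((a%:R - 1 - b%:R + x) / (a%:R - b%:R + x)).

Lemma prod_diff_neq0 x C a : generic x -> \prod_(b <- C) (a%:R - b%:R + x) != 0.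
Proof.
move=> gx; rewrite prodf_seq_neq0; apply/allP => b _.
exact/generic_neq0/generic_shift.
Qed.

Lemma prod2_diff_neq0 x B C : generic x ->
  \prod_(a <- B) \prod_(b <- C) (a%:R - b%:R + x) != 0.
Proof.
by move=> gx; rewrite prodf_seq_neq0; apply/allP => a _; apply: prod_diff_neq0.
Qed.

Lemma HbetaS x C a : generic x -> Hbeta x C a.+1 = Hbeta x C a * gbeta x C a.+1.
Proof.
move=> gx; rewrite /Hbeta /gbeta risingS prodf_div.
have -> : \prod_(b <- C) (a.+1%:R - 1 - b%:R + x) = \prod_(b <- C) (a%:R - b%:R + x).
  by apply: eq_bigr => b _; rewrite mulrSr; ring.
have := prod_diff_neq0 C a gx; have := prod_diff_neq0 C a.+1 gx.
by move=> nz1 nz2; field; rewrite nz1 nz2.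
Qed.

Lemma Hbeta_addn x C a n : generic x ->
  Hbeta x C (a + n) = Hbeta x C a * \prod_(j <- iota 1 n) gbeta x C (a + j).
Proof.
move=> gx; elim: n => [|n IHn]; first by rewrite addn0 big_nil mulr1.
by rewrite addnS HbetaS // IHn iotaSr big_cat big_seq1 add1n addnS /= mulrA.
Qed.

Lemma YbetaE x L B C : Ybeta x L B C =
  (-1) ^+ 'C(L, 2) * x ^+ L * (\prod_(a <- B) Hbeta x C a) *
  \prod_(b <- C) rising (- x) b.
Proof. by rewrite /Ybeta /Hbeta prodf_div; ring. Qed.

Lemma Ybeta_beta x L lam C : generic x ->
  Ybeta x L (beta L lam) C = Ybeta x L (beta L [::]) C *
    \prod_(i <- iota 1 L) \prod_(j <- iota 1 (part lam i)) gbeta x C (L - i + j).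
Proof.
move=> gx; rewrite !YbetaE /beta !big_map.
under eq_big_seq => i.
  rewrite mem_iota => /andP[_ iL].
  rewrite -addnBA; last by rewrite -ltnS -(add1n L).
  rewrite addnC Hbeta_addn //.
  over.
rewrite big_split /=.
under [X in _ = _ * X * _ * _]eq_bigr do rewrite /part nth_nil add0n.
by ring.
Qed.

Lemma prod_seq_opp (s : seq nat) (G : nat -> F) :
  \prod_(i <- s) - G i = (-1) ^+ size s * \prod_(i <- s) G i.
Proof.
elim: s => [|a s IHs]; first by rewrite !big_nil mulr1.
by rewrite !big_cons IHs exprS; ring.
Qed.

Lemma prod_seq_const (s : seq nat) (c : F) : \prod_(i <- s) c = c ^+ size s.
Proof. by elim: s => [|a s IHs]; rewrite ?big_nil // big_cons IHs exprS. Qed.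

Lemma Ybeta_swap x L B C : generic x -> size B = L -> size C = L ->
  Ybeta (- x) L C B = Ybeta x L B C.
Proof.
move=> gx sB sC; rewrite /Ybeta opprK.
have -> : \prod_(a <- C) \prod_(b <- B) (a%:R - b%:R + - x) =
          (-1) ^+ L * \prod_(a <- B) \prod_(b <- C) (a%:R - b%:R + x).
  transitivity (\prod_(a <- C) ((-1) ^+ L * \prod_(b <- B) (b%:R - a%:R + x))).
    by apply: eq_bigr => a _; rewrite -sB -prod_seq_opp; apply: eq_bigr => b _; ring.
  rewrite big_split /= prod_seq_const sC -exprM.
  by rewrite -[(-1) ^+ (L * L)]signr_odd oddM andbb signr_odd [in RHS]exchange_big.
have := prod2_diff_neq0 B C gx; have : (-1) ^+ L != 0 :> F by rewrite signr_eq0.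
by move=> nz1 nz2; rewrite [(- x) ^+ L]exprNn; field; rewrite nz1 nz2.
Qed.

Lemma prod_iota0_rev L (G : nat -> F) :
  \prod_(b <- iota 0 L) G b = \prod_(i <- iota 1 L) G (L - i)%N.
Proof. by rewrite -big_rev rev_iota0 big_map. Qed.

Lemma prod_iota0_diff x L :
  \prod_(a <- iota 0 L) \prod_(b <- iota 0 L) (a%:R - b%:R + x) =
  (-1) ^+ 'C(L, 2) * x ^+ L *
  ((\prod_(a <- iota 0 L) rising x a) * (\prod_(b <- iota 0 L) rising (- x) b)).
Proof.
elim: L => [|L IHL]; first by rewrite !big_nil expr0 !mulr1.
have last_row : \prod_(b <- iota 0 L) (L%:R - b%:R + x) = rising x L.
  rewrite prod_iota0_rev /rising big_seq [RHS]big_seq; apply: eq_bigr => i.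
  by rewrite mem_iota => /andP[_ iL]; rewrite natrB; [ring | rewrite -ltnS -(add1n L)].
have last_col : \prod_(a <- iota 0 L) (a%:R - L%:R + x) = (-1) ^+ L * rising (- x) L.
  rewrite prod_iota0_rev /rising -[in (-1) ^+ L](size_iota 1 L) -prod_seq_opp.
  rewrite big_seq [RHS]big_seq; apply: eq_bigr => i.
  by rewrite mem_iota => /andP[_ iL]; rewrite natrB; [ring | rewrite -ltnS -(add1n L)].
rewrite iotaSr add0n !big_cat !big_seq1 /=.
under eq_bigr do rewrite big_cat big_seq1 /=.
rewrite big_split big_cat big_seq1 /= last_row last_col IHL binS bin1 exprD exprS subrr add0r.
by ring.
Qed.

Lemma Ybeta_nil x L : generic x -> Ybeta x L (beta L [::]) (beta L [::]) = 1.
Proof.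
move=> gx; rewrite /Ybeta beta_nil.
under [in X in _ / X]eq_bigr do rewrite big_rev.
by rewrite !big_rev -prod_iota0_diff divff // prod2_diff_neq0.
Qed.

(* [col_factor mu (j - i + x)] is the factor of X attached to the box (i, j)
   of lambda. *)
Definition col_term mu y k :=
  (y + (conjp mu k)%:R - k%:R + 1) / (y + (conjp mu k)%:R - k%:R).

Definition col_factor mu y :=
  (y - (part mu 1)%:R) * \prod_(k <- iota 1 (part mu 1)) col_term mu y k.

Definition row_term mu y m :=
  (y + m%:R - 1 - (part mu m)%:R) / (y + m%:R - (part mu m)%:R).

Definition row_factor mu L y := (y + L%:R) * \prod_(m <- iota 1 L) row_term mu y m.

Lemma col_factor_nil y : col_factor [::] y = y.
Proof. by rewrite /col_factor /= big_nil mulr1 subr0. Qed.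

Lemma row_factor_nil L y : generic y -> row_factor [::] L y = y.
Proof.
move=> gy; rewrite /row_factor.
rewrite (eq_bigr (fun m => (y + m%:R - 1) / (y + m.+1%:R - 1))); last first.
  by move=> m _; rewrite /row_term /part nth_nil mulrSr; congr (_ / _); ring.
rewrite (prod_telescope (h := fun k => y + k%:R - 1)); last by move=> k; exact: gy k 1%N.
have -> : y + (1 + L)%:R - 1 = y + L%:R by rewrite natrD; ring.
have yL_neq0 : y + L%:R != 0 by have := gy L 0%N; rewrite subr0.
by rewrite mulrC divfK //; ring.
Qed.

Lemma col_term_cons r mu y k :
  (k <= r)%N -> col_term (r :: mu) y k = col_term mu (y + 1) k.
Proof.
by move=> kr; rewrite /col_term /conjp /= kr add1n mulrSr; congr (_ / _); ring.
Qed.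

Lemma col_factor_cons r mu y : generic y -> is_partition (r :: mu) ->
  col_factor (r :: mu) y = (y - r%:R) / (y + 1 - r%:R) * col_factor mu (y + 1).
Proof.
move=> gy rmu_part; have [mu_part mu_le_r] := is_partition_cons rmu_part.
have mu1_le_r := part1_le mu_le_r; set mu1 := part mu 1 in mu1_le_r *.
rewrite /col_factor -[part (r :: mu) 1]/r -/mu1.
have -> : iota 1 r = iota 1 mu1 ++ iota (1 + mu1) (r - mu1) by rewrite -iotaD subnKC.
have head_cols : \prod_(k <- iota 1 mu1) col_term (r :: mu) y k =
                 \prod_(k <- iota 1 mu1) col_term mu (y + 1) k.
  apply: eq_big_seq => k; rewrite mem_iota => /andP[_ k_le].
  by rewrite col_term_cons // (leq_trans _ mu1_le_r) // -ltnS -(add1n mu1).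
have tail_cols : \prod_(k <- iota (1 + mu1) (r - mu1)) col_term (r :: mu) y k =
                 (y + 1 - mu1%:R) / (y + 1 - r%:R).
  rewrite (eq_big_seq (fun k => (y + 2%:R - k%:R) / (y + 2%:R - k.+1%:R))); last first.
    move=> k; rewrite mem_iota => /andP[mu1_lt_k k_le].
    rewrite col_term_cons; last by lia.
    rewrite /col_term (conjp_eq0 mu_part) // [k.+1%:R]mulrSr.
    by congr (_ / _); ring.
  rewrite (prod_telescope (h := fun k => y + 2%:R - k%:R)); last by move=> k; exact: gy.
  by rewrite -addnA subnKC // !natrD; congr (_ / _); ring.
by rewrite big_cat head_cols tail_cols /=; ring.
Qed.

Lemma row_factor_cons r mu L y : generic y ->
  row_factor (r :: mu) L.+1 y = (y - r%:R) / (y + 1 - r%:R) * row_factor mu L (y + 1).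
Proof.
move=> gy; rewrite /row_factor -[iota 1 L.+1]/(1%N :: iota (1 + 1) L).
rewrite iotaDl big_cons big_map.
have other_rows : \prod_(m <- iota 1 L) row_term (r :: mu) y (1 + m) =
                  \prod_(m <- iota 1 L) row_term mu (y + 1) m.
  apply: eq_big_seq => -[|m]; rewrite mem_iota // => _.
  rewrite /row_term -[part (r :: mu) _]/(part mu m.+1) add1n mulrSr.
  by congr (_ / _); ring.
by rewrite other_rows /row_term -[part (r :: mu) 1]/r mulrSr; ring.
Qed.

Lemma col_factor_row_factor mu L y : is_partition mu -> (size mu <= L)%N ->
  generic y -> col_factor mu y = row_factor mu L y.
Proof.
elim: mu L y => [|r mu IHmu] L y mu_part muL gy.
  by rewrite col_factor_nil row_factor_nil.
case: L muL => // L muL; have [mu'_part _] := is_partition_cons mu_part.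
by rewrite col_factor_cons // row_factor_cons // (IHmu L) //; apply: generic_add1.
Qed.

Lemma gbeta_row_factor x mu L i j : (i <= L)%N ->
  gbeta x (beta L mu) (L - i + j) = row_factor mu L (j%:R - i%:R + x).
Proof.
move=> iL; rewrite /gbeta /row_factor /beta big_map natrD natrB //.
congr (_ * _); first by ring.
apply: eq_big_seq => m; rewrite mem_iota => /andP[_ m_le].
rewrite natrB ?natrD; last by lia.
by rewrite /row_term; congr (_ / _); ring.
Qed.

Lemma prod_diag_gbeta x mu s L : generic x -> is_partition mu ->
  (size mu <= L)%N -> (size s <= L)%N ->
  \prod_(i <- iota 1 L) \prod_(j <- iota 1 (part s i)) gbeta x (beta L mu) (L - i + j) =
  \prod_(i <- iota 1 (size s)) \prod_(j <- iota 1 (part s i)) col_factor mu (j%:R - i%:R + x).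
Proof.
move=> gx mu_part muL sL.
have -> : iota 1 L = iota 1 (size s) ++ iota (1 + size s) (L - size s).
  by rewrite -iotaD subnKC.
rewrite big_cat /= [X in _ * X]big1_seq ?mulr1 => [|i]; last first.
  rewrite mem_iota => /and3P[_ s_lt_i _].
  by rewrite /part nth_default ?big_nil // -ltnS prednK // (leq_trans _ s_lt_i).
apply: eq_big_seq => i; rewrite mem_iota => /andP[_ i_le]; apply: eq_bigr => j _.
by rewrite gbeta_row_factor ?(col_factor_row_factor _ muL) //; [apply: generic_shift | lia].
Qed.

End BetaProducts.

Lemma generic_xx : generic xx.
Proof.
move=> n m; rewrite /xx.
have -> : tofrac ('X : {poly rat}) + n%:R - m%:R = tofrac ('X + (n%:R - m%:R)%:P).
  by rewrite rmorphD /= polyCB rmorphB /= !polyC_natr !rmorph_nat addrA.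
by rewrite tofrac_eq0 -size_poly_eq0 size_XaddC.
Qed.

Lemma Ylm_Ybeta L lam mu : Ylm L lam mu = Ybeta xx L (beta L lam) (beta L mu).
Proof. by []. Qed.

Theorem lemma3p2 (lam mu : seq nat) (L : nat) :
  is_partition lam -> is_partition mu ->
  (maxn (plen lam) (plen mu) <= L)%N ->
  Xlm lam mu = Ylm L lam mu.
Proof.
move=> lam_part mu_part; rewrite geq_max => /andP[lamL muL].
have gx := generic_xx; have gNx := generic_opp gx.
rewrite Ylm_Ybeta Ybeta_beta // -(Ybeta_swap gx (size_beta _ _) (size_beta _ _)).
rewrite Ybeta_beta // Ybeta_nil // mul1r.
rewrite (prod_diag_gbeta gNx) // (prod_diag_gbeta gx) //.
rewrite /Xlm /prod_diag /plen; congr (_ * _); apply: eq_bigr => i _; apply: eq_bigr => j _.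
  by rewrite col_factor_nil.
rewrite /col_factor; congr (_ * _); first by ring.
by apply: eq_bigr => k _; rewrite /col_term; congr (_ / _); ring.
Qed.
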